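(* Let $(C\otimes V,\delta_{C\otimes V})$ be a weak crossed coproduct with precounit $\upsilon$ and associated morphisms $\chi_V^C,\tau_V^C$, let $D$ be a coalgebra, and let $p_C:D\rightarrow C$ be a coalgebra morphism and $p_V:D\rightarrow V$ a morphism. The following are equivalent. (i) There exists a unique coalgebra morphism $\varpi:D\rightarrow C\Box V$ such that $\gamma_\upsilon\circ i_{C\otimes V}\circ\varpi=p_C$ and $(\varepsilon_C\otimes V)\circ i_{C\otimes V}\circ\varpi=p_V$. (ii) $\upsilon\circ(p_C\otimes p_V)\circ\delta_D=\varepsilon_D$, $\chi_V^C\circ(p_C\otimes p_V)\circ\delta_D=(p_V\otimes p_C)\circ\delta_D$ and $\tau_V^C\circ(p_C\otimes p_V)\circ\delta_D=(p_V\otimes p_V)\circ\delta_D$.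
   Context: $\mathcal C$ is a strict monoidal category with tensor product $\otimes$ and unit object $K$ in which every idempotent splits (every idempotent $\Gamma$ factors as $i\circ p$ with $p\circ i$ the identity of its image). We write $C\otimes f$ for $id_C\otimes f$. A coalgebra $C$ has counit $\varepsilon_C$ and coproduct $\delta_C$. Weak crossed coproducts. Let $C$ be a coalgebra and $V$ an object, and let $\chi_V^C:C\otimes V\rightarrow V\otimes C$ satisfy $(\chi_V^C\otimes C)\circ(C\otimes\chi_V^C)\circ(\delta_C\otimes V)=(V\otimes\delta_C)\circ\chi_V^C$. Then $\Gamma_{C\otimes V}=(C\otimes V\otimes\varepsilon_C)\circ(C\otimes\chi_V^C)\circ(\delta_C\otimes V)$ is idempotent; $C\Box V$ denotes its image with injection $i_{C\otimes V}$ and projection $p_{C\otimes V}$. Let $\tau_V^C:C\otimes V\rightarrow V\otimes V$ with $\tau_V^C\circ\Gamma_{C\otimes V}=\tau_V^C$. The twisted condition is $(\tau_V^C\otimes C)\circ(C\otimes\chi_V^C)\circ(\delta_C\otimes V)=(V\otimes\chi_V^C)\circ(\chi_V^C\otimes V)\circ(C\otimes\tau_V^C)\circ(\delta_C\otimes V)$ and the cocycle condition is $(\tau_V^C\otimes V)\circ(C\otimes\tau_V^C)\circ(\delta_C\otimes V)=(V\otimes\tau_V^C)\circ(\chi_V^C\otimes V)\circ(C\otimes\tau_V^C)\circ(\delta_C\otimes V)$. Put $\delta_{C\otimes V}=(C\otimes\chi_V^C\otimes V)\circ(\delta_C\otimes\tau_V^C)\circ(\delta_C\otimes V)$. If the twisted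 and cocycle conditions hold, $(C\otimes V,\delta_{C\otimes V})$ is a weak crossed coproduct. For $\upsilon:C\otimes V\rightarrow K$ put $\gamma_\upsilon=(C\otimes\upsilon)\circ(\delta_C\otimes V)$. A weak crossed coproduct with precounit $\upsilon$ is one with $(V\otimes\upsilon)\circ(\chi_V^C\otimes V)\circ(C\otimes\tau_V^C)\circ(\delta_C\otimes V)=(\varepsilon_C\otimes V)\circ\Gamma_{C\otimes V}$, $(\upsilon\otimes V)\circ(C\otimes\tau_V^C)\circ(\delta_C\otimes V)=(\varepsilon_C\otimes V)\circ\Gamma_{C\otimes V}$ and $(\upsilon\otimes C)\circ(C\otimes\chi_V^C)\circ(\delta_C\otimes V)=\gamma_\upsilon$. Then $C\Box V$ is a coalgebra with coproduct $(p_{C\otimes V}\otimes p_{C\otimes V})\circ\delta_{C\otimes V}\circ i_{C\otimes V}$ and counit $\upsilon\circ i_{C\otimes V}$. *)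

(* Strict monoidal categories are presented in "one-sorted" form: a single
   type of morphisms with domain/codomain maps.  This avoids transports along
   the (propositional) strictness equalities A⊗(B⊗C) = (A⊗B)⊗C, A⊗K = A. *)

Set Implicit Arguments.

Record StrictMonoidalCat := {
  ob : Type;
  mor : Type;
  dom : mor -> ob;
  cod : mor -> ob;
  idm : ob -> mor;
  comp : mor -> mor -> mor;            (* comp g f = g ∘ f *)
  tens : ob -> ob -> ob;
  tensm : mor -> mor -> mor;
  unit : ob;
  dom_id : forall A, dom (idm A) = A;
  cod_id : forall A, cod (idm A) = A;
  dom_comp : forall g f, cod f = dom g -> dom (comp g f) = dom f;
  cod_comp : forall g f, cod f = dom g -> cod (comp g f) = cod g;
  comp_assoc : forall h g f, cod f = dom g -> cod g = dom h ->
      comp h (comp g f) = comp (comp h g) f;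
  comp_id_l : forall f, comp (idm (cod f)) f = f;
  comp_id_r : forall f, comp f (idm (dom f)) = f;
  dom_tensm : forall f g, dom (tensm f g) = tens (dom f) (dom g);
  cod_tensm : forall f g, cod (tensm f g) = tens (cod f) (cod g);
  tensm_id : forall A B, tensm (idm A) (idm B) = idm (tens A B);
  tensm_comp : forall g f g' f', cod f = dom g -> cod f' = dom g' ->
      tensm (comp g f) (comp g' f') = comp (tensm g g') (tensm f f');
  tens_assoc : forall A B C, tens A (tens B C) = tens (tens A B) C;
  tensm_assoc : forall f g h, tensm f (tensm g h) = tensm (tensm f g) h;
  tens_unit_l : forall A, tens unit A = A;
  tens_unit_r : forall A, tens A unit = A;
  tensm_unit_l : forall f, tensm (idm unit) f = f;
  tensm_unit_r : forall f, tensm f (idm unit) = f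
}.

Arguments idm {s}.
Arguments comp {s}.
Arguments tens {s}.
Arguments tensm {s}.
Arguments dom {s}.
Arguments cod {s}.
Arguments unit {s}.

Notation "g ° f" := (comp g f) (at level 40, left associativity).
Notation "f ⊗ g" := (tensm f g) (at level 35, right associativity).
Notation "A ⊗o B" := (tens A B) (at level 35, right associativity).

Section Defs.
Context {M : StrictMonoidalCat}.

Definition hom (f : mor M) (A B : ob M) : Prop := dom f = A /\ cod f = B.

Definition idempotent (e : mor M) (A : ob M) : Prop := hom e A A /\ e ° e = e.

Definition splits_as (e : mor M) (A X : ob M) (i p : mor M) : Prop :=
  hom i X A /\ hom p A X /\ i ° p = e /\ p ° i = idm X.

Definition is_coalgebra (C : ob M) (d e : mor M) : Prop :=
  hom d C (C ⊗o C) /\ hom e C unit /\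
  (d ⊗ idm C) ° d = (idm C ⊗ d) ° d /\
  (e ⊗ idm C) ° d = idm C /\ (idm C ⊗ e) ° d = idm C.

Definition is_coalgebra_morphism (D C : ob M) (dD eD dC eC f : mor M) : Prop :=
  hom f D C /\ (f ⊗ f) ° dD = dC ° f /\ eC ° f = eD.

Section WCC.
Variables (C V : ob M) (dC eC chi tau : mor M).

Definition Gamma : mor M := (idm C ⊗ idm V ⊗ eC) ° (idm C ⊗ chi) ° (dC ⊗ idm V).

Definition delta_CV : mor M :=
  (idm C ⊗ chi ⊗ idm V) ° (dC ⊗ tau) ° (dC ⊗ idm V).

Definition gamma_ups (ups : mor M) : mor M := (idm C ⊗ ups) ° (dC ⊗ idm V).

Definition chi_condition : Prop :=
  (chi ⊗ idm C) ° (idm C ⊗ chi) ° (dC ⊗ idm V) = (idm V ⊗ dC) ° chi.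

Definition twisted_condition : Prop :=
  (tau ⊗ idm C) ° (idm C ⊗ chi) ° (dC ⊗ idm V)
  = (idm V ⊗ chi) ° (chi ⊗ idm V) ° (idm C ⊗ tau) ° (dC ⊗ idm V).

Definition cocycle_condition : Prop :=
  (tau ⊗ idm V) ° (idm C ⊗ tau) ° (dC ⊗ idm V)
  = (idm V ⊗ tau) ° (chi ⊗ idm V) ° (idm C ⊗ tau) ° (dC ⊗ idm V).

Definition weak_crossed_coproduct : Prop :=
  is_coalgebra C dC eC /\
  hom chi (C ⊗o V) (V ⊗o C) /\ hom tau (C ⊗o V) (V ⊗o V) /\
  chi_condition /\ tau ° Gamma = tau /\
  twisted_condition /\ cocycle_condition.

Definition precounit (ups : mor M) : Prop :=
  hom ups (C ⊗o V) unit /\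
  (idm V ⊗ ups) ° (chi ⊗ idm V) ° (idm C ⊗ tau) ° (dC ⊗ idm V)
    = (eC ⊗ idm V) ° Gamma /\
  (ups ⊗ idm V) ° (idm C ⊗ tau) ° (dC ⊗ idm V) = (eC ⊗ idm V) ° Gamma /\
  (ups ⊗ idm C) ° (idm C ⊗ chi) ° (dC ⊗ idm V) = gamma_ups ups.

End WCC.
End Defs.

Definition idempotents_split (M0 : StrictMonoidalCat) : Prop :=
  forall (e : mor M0) (A : ob M0), @idempotent M0 e A -> exists X i p, @splits_as M0 e A X i p.

Set Implicit Arguments.

(* Write [u := (p_C ⊗ p_V) ∘ δ_D].  The weak crossed coproduct satisfies
   (Γ ⊗ Γ) ∘ δ = δ and (γ_υ ⊗ ε_C ⊗ V) ∘ δ = Γ, so for any coalgebra morphism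
   ϖ : D → C□V the morphism i ∘ ϖ is comultiplicative and Γ-invariant, hence
   i ∘ ϖ = (γ_υ ⊗ ε_C ⊗ V) ∘ (i ∘ ϖ ⊗ i ∘ ϖ) ∘ δ_D = u by the two normalisation
   conditions.  This gives uniqueness, and (ii) follows by applying υ,
   ε_C ⊗ V ⊗ γ_υ and ε_C ⊗ V ⊗ ε_C ⊗ V to δ ∘ u = (u ⊗ u) ∘ δ_D, using
   (ε_C ⊗ V ⊗ γ_υ) ∘ δ = χ ∘ Γ and (ε_C ⊗ V ⊗ ε_C ⊗ V) ∘ δ = τ.  Conversely,
   under (ii) the morphism u is Γ-invariant and comultiplicative, and
   ϖ := p ∘ u is the factorisation. *)

Section Typing.
Context {M : StrictMonoidalCat}.
Implicit Types (f g : mor M) (A B : ob M).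

Lemma hom_id A : hom (idm A) A A.
Proof. split; [apply dom_id | apply cod_id]. Qed.

Lemma hom_comp f g A B B' C0 : hom f A B -> hom g B' C0 -> B = B' -> hom (g ° f) A C0.
Proof.
  intros [H1 H2] [H3 H4] E; subst; split.
  - rewrite dom_comp; congruence.
  - rewrite cod_comp; congruence.
Qed.

Lemma hom_tens f g A B A' B' : hom f A B -> hom g A' B' -> hom (f ⊗ g) (A ⊗o A') (B ⊗o B').
Proof. intros [H1 H2] [H3 H4]; split; [rewrite dom_tensm | rewrite cod_tensm]; congruence. Qed.

Lemma hom_cast f A B A' B' : hom f A B -> A = A' -> B = B' -> hom f A' B'.
Proof. intros H E1 E2; subst; auto. Qed.

Lemma hom_composable f g A B B' C0 : hom f A B -> hom g B' C0 -> B = B' -> cod f = dom g.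
Proof. intros [H1 H2] [H3 H4] E; congruence. Qed.
End Typing.

Ltac ob_norm :=
  repeat (first [rewrite tens_unit_l | rewrite tens_unit_r | rewrite <- tens_assoc]);
  reflexivity.

Ltac hom_infer := match goal with
| |- hom (comp _ _) _ _ => eapply hom_comp; [hom_infer | hom_infer | ob_norm]
| |- hom (tensm _ _) _ _ => eapply hom_tens; [hom_infer | hom_infer]
| |- hom (idm _) _ _ => apply hom_id
| _ => eassumption
end.
Ltac hom_auto := eapply hom_cast; [hom_infer | ob_norm | ob_norm].
Ltac composable := eapply hom_composable; [hom_infer | hom_infer | ob_norm].
Ltac side := first [composable | hom_auto | ob_norm | assumption].

Section Calculus.
Context {M : StrictMonoidalCat}.
Implicit Types (f g h q a b c d e r : mor M) (A B : ob M).

Lemma compA h g f : cod f = dom g -> cod g = dom h -> h ° (g ° f) = h ° g ° f.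
Proof. intros; apply comp_assoc; auto. Qed.

Lemma comp_idl f A B : hom f A B -> idm B ° f = f.
Proof. intros [H1 H2]; subst; apply comp_id_l. Qed.

Lemma comp_idr f A B : hom f A B -> f ° idm A = f.
Proof. intros [H1 H2]; subst; apply comp_id_r. Qed.

Lemma comp_tensm g f g2 f2 : cod f = dom g -> cod f2 = dom g2 ->
  (g ⊗ g2) ° (f ⊗ f2) = (g ° f) ⊗ (g2 ° f2).
Proof. intros; symmetry; apply tensm_comp; auto. Qed.

Lemma tensm_right_first f g A B A2 B2 : hom f A B -> hom g A2 B2 ->
  f ⊗ g = (f ⊗ idm B2) ° (idm A ⊗ g).
Proof.
  intros [H1 H2] [H3 H4]; subst.
  rewrite comp_tensm; [| rewrite cod_id; auto | rewrite dom_id; auto].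
  rewrite comp_id_r, comp_id_l; auto.
Qed.

Lemma tensm_left_first f g A B A2 B2 : hom f A B -> hom g A2 B2 ->
  f ⊗ g = (idm B ⊗ g) ° (f ⊗ idm A2).
Proof.
  intros [H1 H2] [H3 H4]; subst.
  rewrite comp_tensm; [| rewrite dom_id; auto | rewrite cod_id; auto].
  rewrite comp_id_r, comp_id_l; auto.
Qed.

(* Composition associates to the left, so an equation [a ° b = r] does not
   occur syntactically in [q ° a ° b]; the [comp_rw] lemmas rewrite with it
   after a prefix of up to six factors. *)
Lemma comp_rw2 q a b r : a ° b = r -> cod b = dom a -> cod a = dom q -> q ° a ° b = q ° r.
Proof. intros E H1 H2; rewrite <- compA; congruence. Qed.

Lemma comp_rw3 q a b c r : a ° b ° c = r -> cod c = dom b -> cod b = dom a -> cod a = dom q ->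
  q ° a ° b ° c = q ° r.
Proof.
  intros E H1 H2 H3; rewrite <- E, <- (compA q a b); auto.
  rewrite <- (compA q (a ° b) c); auto.
  - rewrite dom_comp; auto.
  - rewrite cod_comp; auto.
Qed.

Ltac composable_comp :=
  first [assumption | rewrite dom_comp; [composable_comp | composable_comp]
        | rewrite cod_comp; [composable_comp | composable_comp]].

Lemma comp_rw4 q a b c d r : a ° b ° c ° d = r -> cod d = dom c -> cod c = dom b ->
  cod b = dom a -> cod a = dom q -> q ° a ° b ° c ° d = q ° r.
Proof.
  intros E H1 H2 H3 H4; rewrite (comp_rw3 q a b c (@eq_refl _ (a ° b ° c))); auto.
  apply comp_rw2; auto; composable_comp.
Qed.

Lemma comp_rw5 q a b c d e r : a ° b ° c ° d ° e = r -> cod e = dom d -> cod d = dom c ->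
  cod c = dom b -> cod b = dom a -> cod a = dom q -> q ° a ° b ° c ° d ° e = q ° r.
Proof.
  intros E H1 H2 H3 H4 H5; rewrite (comp_rw4 q a b c d (@eq_refl _ (a ° b ° c ° d))); auto.
  apply comp_rw2; auto; composable_comp.
Qed.

Lemma comp_rw6 q a b c d e f r : a ° b ° c ° d ° e ° f = r -> cod f = dom e ->
  cod e = dom d -> cod d = dom c -> cod c = dom b -> cod b = dom a -> cod a = dom q ->
  q ° a ° b ° c ° d ° e ° f = q ° r.
Proof.
  intros E H0 H1 H2 H3 H4 H5.
  rewrite (comp_rw5 q a b c d e (@eq_refl _ (a ° b ° c ° d ° e))); auto.
  apply comp_rw2; auto; composable_comp.
Qed.

Lemma comp_tensm_rw q g f g2 f2 : cod f = dom g -> cod f2 = dom g2 -> cod (g ⊗ g2) = dom q ->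
  q ° (g ⊗ g2) ° (f ⊗ f2) = q ° ((g ° f) ⊗ (g2 ° f2)).
Proof.
  intros; apply comp_rw2; auto.
  - apply comp_tensm; auto.
  - rewrite cod_tensm, dom_tensm; congruence.
Qed.

Lemma comp_tensm_unit_r f g A W B : hom f A W -> hom g B unit -> f ° (idm A ⊗ g) = f ⊗ g.
Proof. intros Hf Hg; rewrite (tensm_right_first Hf Hg), tensm_unit_r; auto. Qed.

Lemma comp_tensm_unit_l f g A W B : hom f A W -> hom g B unit -> f ° (g ⊗ idm A) = g ⊗ f.
Proof. intros Hf Hg; rewrite (tensm_left_first Hg Hf), tensm_unit_l; auto. Qed.

Lemma tensm_idl_comp A g f : cod f = dom g -> idm A ⊗ (g ° f) = (idm A ⊗ g) ° (idm A ⊗ f).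
Proof.
  intros; rewrite comp_tensm; auto.
  - pose proof (comp_id_r _ (idm A)) as E; rewrite dom_id in E; rewrite E; auto.
  - rewrite cod_id, dom_id; auto.
Qed.

Lemma tensm_idr_comp A g f : cod f = dom g -> (g ° f) ⊗ idm A = (g ⊗ idm A) ° (f ⊗ idm A).
Proof.
  intros; rewrite comp_tensm; auto.
  - pose proof (comp_id_r _ (idm A)) as E; rewrite dom_id in E; rewrite E; auto.
  - rewrite cod_id, dom_id; auto.
Qed.
End Calculus.

Ltac rwc E := first [ rewrite E by side | rewrite (comp_rw2 _ _ _ E) by side
  | rewrite (comp_rw3 _ _ _ _ E) by side | rewrite (comp_rw4 _ _ _ _ _ E) by side
  | rewrite (comp_rw5 _ _ _ _ _ _ E) by side | rewrite (comp_rw6 _ _ _ _ _ _ _ E) by side ].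
Ltac lassoc := repeat rewrite compA by side.
Ltac ids := repeat (first [erewrite comp_idr by side | erewrite comp_idl by side]).
Ltac merge_at F := first [rewrite (comp_tensm _ F) by side | rewrite (comp_tensm_rw _ _ F) by side].
Ltac merge_at2 G F := first [rewrite (comp_tensm G F) by side | rewrite (comp_tensm_rw _ G F) by side].

Section WeakCrossedCoproduct.
Context {M : StrictMonoidalCat}.
Variables (C V : ob M) (dC eC chi tau ups : mor M).
Hypotheses (HdC : hom dC C (C ⊗o C)) (HeC : hom eC C unit)
  (coassC : (dC ⊗ idm C) ° dC = (idm C ⊗ dC) ° dC)
  (counitC_l : (eC ⊗ idm C) ° dC = idm C)
  (Hchi : hom chi (C ⊗o V) (V ⊗o C)) (Htau : hom tau (C ⊗o V) (V ⊗o V))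
  (Hups : hom ups (C ⊗o V) unit)
  (chi_cond : (chi ⊗ idm C) ° (idm C ⊗ chi) ° (dC ⊗ idm V) = (idm V ⊗ dC) ° chi)
  (tau_Gamma : tau ° Gamma C V dC eC chi = tau)
  (twisted : (tau ⊗ idm C) ° (idm C ⊗ chi) ° (dC ⊗ idm V)
     = (idm V ⊗ chi) ° (chi ⊗ idm V) ° (idm C ⊗ tau) ° (dC ⊗ idm V))
  (cocycle : (tau ⊗ idm V) ° (idm C ⊗ tau) ° (dC ⊗ idm V)
     = (idm V ⊗ tau) ° (chi ⊗ idm V) ° (idm C ⊗ tau) ° (dC ⊗ idm V))
  (precounit_chi : (idm V ⊗ ups) ° (chi ⊗ idm V) ° (idm C ⊗ tau) ° (dC ⊗ idm V)
    = (eC ⊗ idm V) ° Gamma C V dC eC chi)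
  (precounit_tau : (ups ⊗ idm V) ° (idm C ⊗ tau) ° (dC ⊗ idm V)
    = (eC ⊗ idm V) ° Gamma C V dC eC chi)
  (precounit_gamma : (ups ⊗ idm C) ° (idm C ⊗ chi) ° (dC ⊗ idm V) = gamma_ups C V dC ups).

Local Notation c := (idm C).
Local Notation v := (idm V).
Local Notation Γ := (Gamma C V dC eC chi).
Local Notation δ := (delta_CV C V dC chi tau).
(* Γ, δ and γ_υ all have the shape [S F]: the first C-factor is copied and
   [F] is applied to the copy together with V. *)
Local Notation X := ((v ⊗ eC) ° chi).
Local Notation S F := ((c ⊗ F) ° (dC ⊗ v)).
Local Notation T := ((chi ⊗ v) ° (c ⊗ tau) ° (dC ⊗ v)).

Lemma GammaE : Γ = S X.
Proof. unfold Gamma; rewrite comp_tensm by side; rewrite (comp_idl (A := C)) by side; auto. Qed.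

Lemma coassCV : (dC ⊗ c ⊗ v) ° (dC ⊗ v) = (c ⊗ dC ⊗ v) ° (dC ⊗ v).
Proof.
  rewrite (tensm_assoc _ dC c v), (tensm_assoc _ c dC v), !comp_tensm by side.
  rewrite coassC; auto.
Qed.

Lemma coassCV_rw q W : hom q (C ⊗o C ⊗o C ⊗o V) W ->
  q ° (dC ⊗ c ⊗ v) ° (dC ⊗ v) = q ° (c ⊗ dC ⊗ v) ° (dC ⊗ v).
Proof. intros; rewrite (comp_rw2 _ _ _ coassCV), compA by side; auto. Qed.

Lemma counit_absorb F Y W : hom F (C ⊗o Y) W -> (eC ⊗ F) ° (dC ⊗ idm Y) = F.
Proof.
  intros HF; rewrite <- (comp_tensm_unit_l HF HeC), <- tensm_id, tensm_assoc.
  rewrite <- compA, comp_tensm by side; rewrite counitC_l; ids.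
  rewrite tensm_id; ids; auto.
Qed.

Lemma dC_tensm G A Y : hom G A Y -> (dC ⊗ idm Y) ° (c ⊗ G) = dC ⊗ G.
Proof. intros HG; symmetry; apply (tensm_right_first HdC HG). Qed.

Lemma dC_tensm_VV G A : hom G A (V ⊗o V) -> (dC ⊗ v ⊗ v) ° (c ⊗ G) = dC ⊗ G.
Proof. intros HG; rewrite tensm_id; apply (dC_tensm HG). Qed.

Lemma dC_tensm_VV_rw q W G A : hom G A (V ⊗o V) -> hom q (C ⊗o C ⊗o V ⊗o V) W ->
  q ° (dC ⊗ v ⊗ v) ° (c ⊗ G) = q ° (dC ⊗ G).
Proof. intros HG Hq; rewrite (comp_rw2 _ _ _ (dC_tensm_VV HG)) by side; auto. Qed.

Lemma dC_tensm_VCV G A : hom G A (V ⊗o C ⊗o V) -> (dC ⊗ v ⊗ c ⊗ v) ° (c ⊗ G) = dC ⊗ G.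
Proof. intros HG; rewrite !tensm_id; apply (dC_tensm HG). Qed.

Lemma dC_tensm_VCV_rw q W G A : hom G A (V ⊗o C ⊗o V) ->
  hom q (C ⊗o C ⊗o V ⊗o C ⊗o V) W ->
  q ° (dC ⊗ v ⊗ c ⊗ v) ° (c ⊗ G) = q ° (dC ⊗ G).
Proof. intros HG Hq; rewrite (comp_rw2 _ _ _ (dC_tensm_VCV HG)) by side; auto. Qed.

Lemma S_nest F G Y W : hom G (C ⊗o V) Y -> hom F (C ⊗o Y) W ->
  (c ⊗ F) ° (dC ⊗ G) ° (dC ⊗ v) = S (F ° (c ⊗ G) ° (dC ⊗ v)).
Proof.
  intros HG HF; rewrite (tensm_left_first HdC HG), <- ?tensm_id, <- tensm_assoc; lassoc.
  erewrite coassCV_rw by side; rewrite !comp_tensm by side; ids; auto.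
Qed.

Lemma S_nest_rw q W2 F G Y W : hom G (C ⊗o V) Y -> hom F (C ⊗o Y) W -> hom q (C ⊗o W) W2 ->
  q ° (c ⊗ F) ° (dC ⊗ G) ° (dC ⊗ v) = q ° S (F ° (c ⊗ G) ° (dC ⊗ v)).
Proof. intros HG HF Hq; rewrite (comp_rw3 _ _ _ _ (S_nest HG HF)) by side; auto. Qed.

Lemma hom_X : hom X (C ⊗o V) V.
Proof. hom_auto. Qed.

Lemma hom_T : hom T (C ⊗o V) (V ⊗o C ⊗o V).
Proof. hom_auto. Qed.

Lemma hom_Gamma : hom Γ (C ⊗o V) (C ⊗o V).
Proof. rewrite GammaE; hom_auto. Qed.

Lemma deltaE : δ = S T.
Proof. unfold delta_CV; lassoc; erewrite S_nest by side; auto. Qed.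

Lemma hom_delta : hom δ (C ⊗o V) (C ⊗o V ⊗o C ⊗o V).
Proof. rewrite deltaE; hom_auto. Qed.

Lemma counit_S_X : (eC ⊗ v) ° S X = X.
Proof. lassoc; rewrite comp_tensm by side; ids; apply (@counit_absorb _ _ _ hom_X). Qed.

Lemma precounit_chi_X : (v ⊗ ups) ° (chi ⊗ v) ° (c ⊗ tau) ° (dC ⊗ v) = X.
Proof. rewrite precounit_chi, GammaE; apply counit_S_X. Qed.

Lemma precounit_tau_X : (ups ⊗ v) ° (c ⊗ tau) ° (dC ⊗ v) = X.
Proof. rewrite precounit_tau, GammaE; apply counit_S_X. Qed.

Lemma tau_Gamma_expanded : tau ° (c ⊗ v ⊗ eC) ° (c ⊗ chi) ° (dC ⊗ v) = tau.
Proof. pose proof tau_Gamma as E; unfold Gamma in E; rewrite !compA in E by side; exact E. Qed.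

Lemma tau_counit_interchange : (v ⊗ v ⊗ eC) ° (tau ⊗ c) = tau ° (c ⊗ v ⊗ eC).
Proof.
  rewrite (tensm_assoc _ c v eC), (tensm_assoc _ v v eC), !tensm_id.
  rewrite (comp_tensm_unit_r Htau HeC); symmetry; apply (tensm_left_first Htau HeC).
Qed.

Lemma chi_X_interchange : (v ⊗ c ⊗ X) ° (chi ⊗ c ⊗ v) = (chi ⊗ v) ° (c ⊗ v ⊗ X).
Proof.
  transitivity (chi ⊗ X).
  - rewrite (tensm_left_first Hchi hom_X), <- ?tensm_id, <- ?tensm_assoc; auto.
  - rewrite (tensm_right_first Hchi hom_X), <- ?tensm_id, <- ?tensm_assoc; auto.
Qed.

Lemma chi_ups_interchange : (v ⊗ c ⊗ ups) ° (chi ⊗ c ⊗ v) = chi ° (c ⊗ v ⊗ ups).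
Proof.
  transitivity (chi ⊗ ups).
  - rewrite (tensm_left_first Hchi Hups), <- ?tensm_id, <- ?tensm_assoc; auto.
  - rewrite (tensm_assoc _ c v ups), tensm_id, (comp_tensm_unit_r Hchi Hups); auto.
Qed.

Lemma dC_tau_interchange : (c ⊗ c ⊗ tau) ° (dC ⊗ c ⊗ v) = (dC ⊗ v ⊗ v) ° (c ⊗ tau).
Proof.
  rewrite (dC_tensm_VV Htau), (tensm_left_first HdC Htau), <- ?tensm_id, <- ?tensm_assoc.
  auto.
Qed.

Lemma ups_tau_interchange : (ups ⊗ v ⊗ v) ° (c ⊗ v ⊗ tau) = tau ° (ups ⊗ c ⊗ v).
Proof.
  transitivity (ups ⊗ tau).
  - rewrite (tensm_right_first Hups Htau), <- ?tensm_id, <- ?tensm_assoc; auto.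
  - rewrite (tensm_left_first Hups Htau), tensm_unit_l, <- ?tensm_id, <- ?tensm_assoc; auto.
Qed.

Lemma X_tensm_chi : (X ⊗ c) ° (c ⊗ chi) ° (dC ⊗ v) = chi.
Proof.
  rewrite tensm_idr_comp by side; lassoc; rwc chi_cond; lassoc.
  rewrite <- tensm_assoc, comp_tensm by side; rewrite counitC_l; ids.
  rewrite tensm_id; ids; auto.
Qed.

Lemma tensm_X_T : (v ⊗ X) ° (chi ⊗ v) ° (c ⊗ tau) ° (dC ⊗ v) = tau.
Proof.
  rewrite tensm_idl_comp by side; lassoc; rwc (eq_sym twisted); lassoc.
  rwc tau_counit_interchange; lassoc; apply tau_Gamma_expanded.
Qed.

Lemma ups_tau_S : (c ⊗ ups ⊗ v) ° (dC ⊗ v ⊗ v) ° (c ⊗ tau) ° (dC ⊗ v) = S X.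
Proof. erewrite dC_tensm_VV_rw, S_nest by side; rewrite precounit_tau_X; auto. Qed.

Lemma ups_chi_tau_S :
  (ups ⊗ c ⊗ v) ° (c ⊗ chi ⊗ v) ° (c ⊗ c ⊗ tau) ° (c ⊗ dC ⊗ v) ° (dC ⊗ v) = S X.
Proof.
  rwc (eq_sym coassCV); lassoc; rwc dC_tau_interchange; lassoc.
  rewrite (tensm_assoc _ ups c v), (tensm_assoc _ c chi v), (tensm_assoc _ dC v v).
  merge_at2 (ups ⊗ c) (c ⊗ chi); merge_at2 (ups ⊗ c ° c ⊗ chi) (dC ⊗ v).
  rewrite precounit_gamma; unfold gamma_ups; ids.
  rewrite tensm_idr_comp by side; rewrite <- ?tensm_assoc; lassoc; apply ups_tau_S.
Qed.

(* The cocycle condition, with the first τ normalised away by [precounit_tau]. *)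
Lemma X_tensm_tau : (X ⊗ v) ° (c ⊗ tau) ° (dC ⊗ v) = tau.
Proof.
  rewrite <- precounit_tau_X, !tensm_idr_comp by side; rewrite <- ?tensm_assoc; lassoc.
  erewrite dC_tensm_VV_rw, S_nest_rw by side; rewrite cocycle, !tensm_idl_comp by side; lassoc.
  rwc ups_tau_interchange; lassoc; rwc ups_chi_tau_S; rewrite <- GammaE; apply tau_Gamma.
Qed.

Lemma X_tensm_T : (X ⊗ c ⊗ v) ° (c ⊗ T) ° (dC ⊗ v) = T.
Proof.
  rewrite !tensm_idl_comp by side; lassoc; rwc (eq_sym coassCV); lassoc.
  rwc dC_tau_interchange; lassoc.
  rewrite (tensm_assoc _ X c v), (tensm_assoc _ c chi v), (tensm_assoc _ dC v v).
  merge_at2 (X ⊗ c) (c ⊗ chi); merge_at2 (X ⊗ c ° c ⊗ chi) (dC ⊗ v).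
  rewrite X_tensm_chi; ids; auto.
Qed.

Lemma S_X_T : (v ⊗ S X) ° T = T.
Proof.
  rewrite tensm_idl_comp by side; lassoc; rewrite (tensm_assoc _ v dC v).
  merge_at chi; ids; rewrite <- chi_cond, !tensm_idr_comp by side.
  rewrite <- ?tensm_assoc; lassoc; rwc chi_X_interchange.
  merge_at2 (idm C) (idm C); ids.
  erewrite dC_tensm_VV_rw, S_nest_rw by side; rewrite tensm_X_T; lassoc; auto.
Qed.

Lemma Gamma_r_delta : (c ⊗ v ⊗ Γ) ° δ = δ.
Proof.
  rewrite deltaE, GammaE; lassoc; merge_at2 (idm C) (idm C); ids; rewrite S_X_T; auto.
Qed.

Lemma Gamma_l_delta : (Γ ⊗ c ⊗ v) ° δ = δ.
Proof.
  rewrite deltaE, GammaE, (tensm_id _ C V), tensm_idr_comp, <- (tensm_id _ C V) by side.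
  rewrite <- ?tensm_assoc; lassoc.
  erewrite dC_tensm_VCV_rw, S_nest by side; rewrite X_tensm_T; auto.
Qed.

Lemma Gamma_tensm_Gamma_delta : (Γ ⊗ Γ) ° δ = δ.
Proof.
  pose proof hom_Gamma; pose proof hom_delta.
  rewrite (tensm_right_first hom_Gamma hom_Gamma), <- (tensm_id _ C V), <- ?tensm_assoc.
  rewrite <- compA by side; rewrite Gamma_r_delta, Gamma_l_delta; auto.
Qed.

Lemma eC_tensm G A : hom G A (V ⊗o C ⊗o V) -> (eC ⊗ v ⊗ c ⊗ v) ° (c ⊗ G) = eC ⊗ G.
Proof. intros HG; rewrite !tensm_id; symmetry; apply (tensm_right_first HeC HG). Qed.

Lemma eC_tensm_delta W f : hom f (V ⊗o C ⊗o V) W -> (eC ⊗ f) ° δ = f ° T.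
Proof.
  intros Hf; rewrite deltaE, <- (comp_tensm_unit_l Hf HeC), <- ?tensm_id; lassoc.
  rwc (eC_tensm hom_T); rewrite <- (compA f) by side.
  rewrite (@counit_absorb _ V _ hom_T); lassoc; auto.
Qed.

Lemma counits_delta : (eC ⊗ v ⊗ eC ⊗ v) ° δ = tau.
Proof.
  rewrite (eC_tensm_delta (W := V ⊗o V)) by side; lassoc.
  rewrite (tensm_assoc _ v eC v); merge_at chi; ids; apply X_tensm_tau.
Qed.

Lemma gamma_counit_delta : (S ups ⊗ eC ⊗ v) ° δ = Γ.
Proof.
  rewrite (tensm_right_first (f := S ups) (g := eC ⊗ v) (A := C ⊗o V) (B := C)
             (A2 := C ⊗o V) (B2 := V)) by side.
  rewrite deltaE, <- ?tensm_id, <- ?tensm_assoc; lassoc.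
  merge_at2 (idm C) (idm C); ids; lassoc.
  rewrite (tensm_assoc _ v eC v); merge_at chi; ids; rewrite X_tensm_tau.
  rewrite tensm_idr_comp by side; rewrite <- ?tensm_assoc; lassoc.
  rewrite ups_tau_S; symmetry; apply GammaE.
Qed.

Lemma counit_gamma_delta : (eC ⊗ v ⊗ S ups) ° δ = chi ° Γ.
Proof.
  rewrite (eC_tensm_delta (W := V ⊗o C)), tensm_idl_comp by side; lassoc.
  rewrite (tensm_assoc _ v dC v); merge_at chi; ids; rewrite <- chi_cond.
  rewrite !tensm_idr_comp by side; rewrite <- ?tensm_assoc; lassoc.
  rwc chi_ups_interchange; lassoc; merge_at2 (idm C) (idm C); ids.
  erewrite dC_tensm_VV_rw, S_nest_rw by side; rewrite precounit_chi_X, GammaE; auto.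
Qed.

Section CoalgebraMorphismPair.
Variables (D : ob M) (dD eD pC pV : mor M).
Hypotheses (HdD : hom dD D (D ⊗o D)) (HeD : hom eD D unit)
  (coassD : (dD ⊗ idm D) ° dD = (idm D ⊗ dD) ° dD)
  (counitD_l : (eD ⊗ idm D) ° dD = idm D) (counitD_r : (idm D ⊗ eD) ° dD = idm D)
  (HpC : hom pC D C) (pC_comul : (pC ⊗ pC) ° dD = dC ° pC) (pC_counit : eC ° pC = eD)
  (HpV : hom pV D V).

Local Notation u := ((pC ⊗ pV) ° dD).

Lemma coassD_tensm a b k A1 B1 K : hom a D A1 -> hom b D B1 -> hom k D K ->
  (a ⊗ ((b ⊗ k) ° dD)) ° dD = (((a ⊗ b) ° dD) ⊗ k) ° dD.
Proof.
  intros Ha Hb Hk.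
  replace (a ⊗ ((b ⊗ k) ° dD)) with ((a ⊗ b ⊗ k) ° (idm D ⊗ dD))
    by (rewrite comp_tensm by side; ids; auto).
  replace (((a ⊗ b) ° dD) ⊗ k) with (((a ⊗ b) ⊗ k) ° (dD ⊗ idm D))
    by (rewrite comp_tensm by side; ids; auto).
  rewrite <- !compA by side; rewrite coassD, tensm_assoc; auto.
Qed.

Lemma S_comp_pair F W : hom F (C ⊗o V) W ->
  (c ⊗ F) ° (dC ⊗ v) ° (pC ⊗ pV) ° dD = (pC ⊗ (F ° (pC ⊗ pV) ° dD)) ° dD.
Proof.
  intros HF; merge_at pC; ids; rewrite <- pC_comul.
  replace (((pC ⊗ pC) ° dD) ⊗ pV) with (((pC ⊗ pC) ⊗ pV) ° (dD ⊗ idm D))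
    by (rewrite comp_tensm by side; ids; auto).
  lassoc; rewrite <- (compA _ (dD ⊗ idm D)) by side; rewrite coassD; lassoc.
  rewrite <- tensm_assoc; merge_at pC; ids; merge_at (idm D); ids; lassoc; auto.
Qed.

Section Conditions.
Hypotheses (cond_ups : ups ° (pC ⊗ pV) ° dD = eD)
  (cond_chi : chi ° (pC ⊗ pV) ° dD = (pV ⊗ pC) ° dD)
  (cond_tau : tau ° (pC ⊗ pV) ° dD = (pV ⊗ pV) ° dD).

Lemma Gamma_pair : Γ ° (pC ⊗ pV) ° dD = u.
Proof.
  rewrite GammaE, (S_comp_pair hom_X); rwc cond_chi; lassoc.
  merge_at pV; ids; rewrite pC_counit, <- (comp_tensm_unit_r HpV HeD); lassoc.
  rwc counitD_r; ids; auto.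
Qed.

Lemma gamma_pair : gamma_ups C V dC ups ° (pC ⊗ pV) ° dD = pC.
Proof.
  unfold gamma_ups; rewrite (S_comp_pair Hups); lassoc; rewrite cond_ups.
  rewrite <- (comp_tensm_unit_r HpC HeD); lassoc; rwc counitD_r; ids; auto.
Qed.

Lemma counit_pair : (eC ⊗ v) ° (pC ⊗ pV) ° dD = pV.
Proof.
  merge_at pC; ids; rewrite pC_counit, <- (comp_tensm_unit_l HpV HeD); lassoc.
  rwc counitD_l; ids; auto.
Qed.

Lemma delta_pair : δ ° u = (u ⊗ u) ° dD.
Proof.
  rewrite deltaE; lassoc; rewrite (S_comp_pair hom_T); lassoc; rwc (S_comp_pair Htau).
  rewrite cond_tau, (coassD_tensm HpC HpV HpV); lassoc.
  merge_at2 chi ((pC ⊗ pV) ° dD); ids; lassoc; rewrite cond_chi.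
  rewrite <- (coassD_tensm HpV HpC HpV); erewrite (coassD_tensm HpC HpV) by side; auto.
Qed.
End Conditions.

Section Factorization.
Variables (CV : ob M) (i p : mor M).
Hypotheses (Hi : hom i CV (C ⊗o V)) (Hp : hom p (C ⊗o V) CV)
  (ip_Gamma : i ° p = Γ) (pi_id : p ° i = idm CV).

Local Notation coalgebra_morphism_to_CV w :=
  (is_coalgebra_morphism D CV dD eD ((p ⊗ p) ° δ ° i) (ups ° i) w).

Lemma Gamma_i : Γ ° i = i.
Proof. rewrite <- ip_Gamma, <- compA, pi_id by side; ids; auto. Qed.

Lemma coalgebra_morphism_to_CV_i w : coalgebra_morphism_to_CV w ->
  δ ° (i ° w) = ((i ° w) ⊗ (i ° w)) ° dD /\ Γ ° (i ° w) = i ° w.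
Proof.
  intros [Hw [Hcomul Hcounit]]; pose proof hom_delta; pose proof hom_Gamma; split.
  - pose proof (f_equal (fun z => (i ⊗ i) ° z) Hcomul) as E; cbv beta in E.
    rewrite !compA, !comp_tensm, ip_Gamma, Gamma_tensm_Gamma_delta in E by side.
    rewrite E; lassoc; auto.
  - rewrite compA, Gamma_i by side; auto.
Qed.

(* Uniqueness: [i ∘ w] is recovered from its two components by
   [gamma_counit_delta]. *)
Lemma i_comp_factorization w : coalgebra_morphism_to_CV w ->
  gamma_ups C V dC ups ° i ° w = pC -> (eC ⊗ idm V) ° i ° w = pV -> i ° w = u.
Proof.
  intros Hw Hgamma Hcounit; destruct (coalgebra_morphism_to_CV_i Hw) as [Hdelta HGamma].
  destruct Hw as [Hw _]; pose proof hom_delta; pose proof hom_Gamma.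
  rewrite <- HGamma, <- gamma_counit_delta, <- compA, Hdelta by side; lassoc.
  rewrite comp_tensm by side; unfold gamma_ups in Hgamma.
  rewrite !compA, Hgamma, Hcounit by side; auto.
Qed.

Lemma conditions_of_factorization :
  (exists! w, coalgebra_morphism_to_CV w /\
     gamma_ups C V dC ups ° i ° w = pC /\ (eC ⊗ idm V) ° i ° w = pV) ->
  ups ° (pC ⊗ pV) ° dD = eD /\ chi ° (pC ⊗ pV) ° dD = (pV ⊗ pC) ° dD /\
  tau ° (pC ⊗ pV) ° dD = (pV ⊗ pV) ° dD.
Proof.
  intros [w [[Hw [Hgamma Hcounit]] _]]; pose proof hom_delta; pose proof hom_Gamma.
  pose proof (i_comp_factorization Hw Hgamma Hcounit) as Hiw.
  destruct (coalgebra_morphism_to_CV_i Hw) as [Hdelta HGamma].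
  destruct Hw as [Hw [Hcomul Hcounit_w]]; rewrite Hiw in Hdelta, HGamma.
  split; [| split].
  - rewrite <- compA, <- Hiw, compA by side; exact Hcounit_w.
  - rewrite <- compA, <- HGamma, compA, <- counit_gamma_delta, <- compA, Hdelta by side.
    lassoc; rewrite tensm_assoc, comp_tensm, <- Hiw, !compA by side.
    unfold gamma_ups in Hgamma; rewrite Hgamma, Hcounit; auto.
  - rewrite <- compA, <- counits_delta, <- compA, Hdelta by side; lassoc.
    rewrite tensm_assoc, comp_tensm, <- Hiw, !compA, Hcounit by side; auto.
Qed.

Lemma factorization_of_conditions :
  ups ° (pC ⊗ pV) ° dD = eD -> chi ° (pC ⊗ pV) ° dD = (pV ⊗ pC) ° dD ->
  tau ° (pC ⊗ pV) ° dD = (pV ⊗ pV) ° dD ->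
  exists! w, coalgebra_morphism_to_CV w /\
     gamma_ups C V dC ups ° i ° w = pC /\ (eC ⊗ idm V) ° i ° w = pV.
Proof.
  intros Hups_u Hchi_u Htau_u; pose proof hom_delta; pose proof hom_Gamma.
  exists (p ° u).
  assert (Hiw : i ° (p ° u) = u) by (rewrite compA, ip_Gamma by side; lassoc; apply (Gamma_pair Hchi_u)).
  split; [split; [split; [| split] | split] |].
  - hom_auto.
  - rewrite <- !compA, Hiw, (delta_pair Hchi_u Htau_u) by side; lassoc.
    rewrite comp_tensm by side; lassoc; auto.
  - rewrite <- compA, Hiw by side; lassoc; exact Hups_u.
  - unfold gamma_ups; rewrite <- compA, Hiw by side; lassoc; apply (gamma_pair Hups_u).
  - rewrite <- compA, Hiw by side; lassoc; apply counit_pair.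
  - intros w' [Hw' [Hgamma Hcounit]].
    rewrite <- (i_comp_factorization Hw' Hgamma Hcounit).
    destruct Hw' as [Hw' _]; rewrite compA, pi_id by side; ids; auto.
Qed.
End Factorization.
End CoalgebraMorphismPair.
End WeakCrossedCoproduct.

Theorem theorem1p16 (M : StrictMonoidalCat) (Hsplit : idempotents_split M)
  (C V D CV : ob M) (dC eC chi tau ups dD eD pC pV i p : mor M)
  (Hwcc : weak_crossed_coproduct C V dC eC chi tau)
  (Hups : precounit C V dC eC chi tau ups)
  (Hsp : splits_as (Gamma C V dC eC chi) (C ⊗o V) CV i p)
  (HD : is_coalgebra D dD eD)
  (HpC : is_coalgebra_morphism D C dD eD dC eC pC)
  (HpV : hom pV D V) :
  (exists! w : mor M,
      is_coalgebra_morphism D CV dD eD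
        ((p ⊗ p) ° delta_CV C V dC chi tau ° i) (ups ° i) w /\
      gamma_ups C V dC ups ° i ° w = pC /\
      (eC ⊗ idm V) ° i ° w = pV)
  <->
  (ups ° (pC ⊗ pV) ° dD = eD /\
   chi ° (pC ⊗ pV) ° dD = (pV ⊗ pC) ° dD /\
   tau ° (pC ⊗ pV) ° dD = (pV ⊗ pV) ° dD).
Proof.
  destruct Hwcc as [[HdC [HeC [coassC [counitC_l _]]]]
                    [Hchi [Htau [chi_cond [tau_Gamma [twisted cocycle]]]]]].
  destruct Hups as [Hu [precounit_chi [precounit_tau precounit_gamma]]].
  destruct Hsp as [Hi [Hp [ip_Gamma pi_id]]].
  destruct HD as [HdD [HeD [coassD [counitD_l counitD_r]]]].
  destruct HpC as [HpC [pC_comul pC_counit]].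
  split.
  - eapply conditions_of_factorization; eassumption.
  - intros [Hups_u [Hchi_u Htau_u]]; eapply factorization_of_conditions; eassumption.
Qed.
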